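(* Let $(X,d)$ be a finite metric space and $k$ an integer with $2\le k\le|X|$. Let $\mathrm{OPT}\subseteq X$ be a fixed $k$-set maximizing $\mathrm{cl}(T)=\sum_{\{u,v\}\subseteq T}d(u,v)$ over $k$-subsets, let $\Delta=\mathrm{cl}(\mathrm{OPT})/\binom{k}{2}$, let $z_0\in\mathrm{OPT}$ be a point minimizing $\sum_{u\in\mathrm{OPT}}d(z_0,u)$ (the center of the minimum weight spanning star of $\mathrm{OPT}$), and let $B=B(z_0,2\Delta)$. Then $|X\setminus B|<k/2$. Moreover, for any ball $B(u,r)$ with $|X\setminus B(u,r)|<k/2$, we have $d(z_0,u)\le 2\Delta+r$.
   Context: $B(u,r)=\{v\in X: d(u,v)\le r\}$. *)

From HB Require Import structures.
From mathcomp Require Import all_boot all_order all_algebra.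
Set Implicit Arguments. Unset Strict Implicit. Unset Printing Implicit Defensive.
Import Order.TTheory GRing.Theory Num.Theory.
Local Open Scope ring_scope.

Definition is_metric (R : realFieldType) (T : finType) (d : T -> T -> R) : Prop :=
  [/\ forall x y, d x y = 0 <-> x = y,
      forall x y, d x y = d y x &
      forall x y z, d x z <= d x y + d y z].

(* cl(A) = sum over unordered pairs {u,v} of distinct elements of A of d(u,v);
   each unordered pair is counted once via the enumeration rank of T. *)
Definition cl (R : realFieldType) (T : finType) (d : T -> T -> R) (A : {set T}) : R :=
  \sum_(u in A) \sum_(v in A | (enum_rank u < enum_rank v)%N) d u v.

Definition ball_set (R : realFieldType) (T : finType) (d : T -> T -> R) (u : T) (r : R)
  : {set T} := [set v | d u v <= r].

From HB Require Import structures.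
From mathcomp Require Import all_boot all_order all_algebra.
From mathcomp Require Import lra.

Set Implicit Arguments.
Unset Strict Implicit.
Unset Printing Implicit Defensive.
Import Order.TTheory GRing.Theory Num.Theory.
Local Open Scope ring_scope.

(* Let S0 be the weight of the spanning star of OPT centred at z0.  Averaging
   over all centres gives S0 <= (k-1) Delta.  A point x outside OPT with
   d(z0,x) > 2 Delta could replace z0 in OPT: by the triangle inequality this
   gains at least (k-1) d(z0,x) - 2 S0 > 0, contradicting maximality.  So every
   point outside B(z0, 2 Delta) lies in OPT and contributes more than 2 Delta to
   S0, whence fewer than (k-1)/2 such points.  Two sets of size < k/2 cannot
   cover X, so B(z0, 2 Delta) meets every ball B(u,r) whose complement has fewer
   than k/2 points, and the triangle inequality bounds d(z0,u). *)

Lemma setI_neq0_card_compl (T : finType) (A B : {set T}) :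
  (#|~: A| + #|~: B| < #|T|)%N -> A :&: B != set0.
Proof.
move=> small; rewrite -card_gt0 cardsCs setCI subn_gt0.
exact: leq_ltn_trans (leq_of_leqif (leq_card_setU _ _)) small.
Qed.

Lemma bin2_mul2 (R : pzRingType) (k : nat) : (0 < k)%N ->
  ('C(k, 2)%:R * 2 = k%:R * (k%:R - 1) :> R).
Proof.
move=> k_gt0; have bin2_mul : ('C(k, 2) * 2 = k * k.-1)%N by rewrite mulnC -mul_bin_diag bin1.
by rewrite -natrM bin2_mul natrM -subn1 natrB.
Qed.

Section FiniteMetric.
Variables (R : realFieldType) (T : finType) (d : T -> T -> R).
Hypothesis d_metric : is_metric d.

Lemma dist_xx x : d x x = 0.
Proof. by case: d_metric => d_eq0 _ _; apply/d_eq0. Qed.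

Lemma dist_sym x y : d x y = d y x.
Proof. by case: d_metric. Qed.

Lemma dist_triangle x y z : d x z <= d x y + d y z.
Proof. by case: d_metric. Qed.

Lemma dist_ge0 x y : 0 <= d x y.
Proof. by have := dist_triangle x y x; rewrite dist_xx (dist_sym y x); lra. Qed.

Definition star_weight (A : {set T}) (z : T) : R := \sum_(u in A) d z u.

Lemma star_weight_ge0 (A : {set T}) z : 0 <= star_weight A z.
Proof. by apply: sumr_ge0 => u _; apply: dist_ge0. Qed.

Lemma cl_ge0 (A : {set T}) : 0 <= cl d A.
Proof. by apply: sumr_ge0 => u _; apply: sumr_ge0 => v _; apply: dist_ge0. Qed.

Lemma cl_sum_star_weight (A : {set T}) : 2 * cl d A = \sum_(z in A) star_weight A z.
Proof.
pose lt_rank (u v : T) := (enum_rank u < enum_rank v)%N.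
have split_dist u v :
    d u v = (if lt_rank u v then d u v else 0) + (if lt_rank v u then d v u else 0).
  rewrite /lt_rank; case: ltngtP => [||/val_inj/enum_rank_inj eq_uv].
  - by rewrite addr0.
  - by rewrite add0r dist_sym.
  - by rewrite eq_uv dist_xx addr0.
rewrite /star_weight (eq_bigr _ (fun u _ => eq_bigr _ (fun v _ => split_dist u v))).
under eq_bigr do rewrite big_split /=.
rewrite big_split /= [X in _ = _ + X]exchange_big /= -mulr2n /cl mulr_natl.
by congr (_ *+ 2); apply: eq_bigr => u _; rewrite big_mkcondr.
Qed.

Lemma cl_setU1 a (A : {set T}) : a \notin A -> cl d (a |: A) = cl d A + star_weight A a.
Proof.
move=> aNA; have star_U1 z : star_weight (a |: A) z = d z a + star_weight A z.
  by rewrite /star_weight big_setU1.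
have sum_U1 : \sum_(z in a |: A) star_weight (a |: A) z
    = 2 * star_weight A a + \sum_(z in A) star_weight A z.
  rewrite big_setU1 //= star_U1 dist_xx add0r.
  under eq_bigr do rewrite star_U1 dist_sym.
  rewrite big_split /= -/(star_weight A a); lra.
have := cl_sum_star_weight (a |: A); rewrite sum_U1 -cl_sum_star_weight; lra.
Qed.

Lemma star_weight_setD1 z (A : {set T}) : z \in A -> star_weight (A :\ z) z = star_weight A z.
Proof. by move=> zA; rewrite /star_weight [RHS](big_setD1 z) //= dist_xx add0r. Qed.

Lemma cl_setD1 z (A : {set T}) : z \in A -> cl d A = cl d (A :\ z) + star_weight A z.
Proof.
by move=> zA; rewrite -star_weight_setD1 // -cl_setU1 ?setD11 // setD1K.
Qed.

Lemma star_weight_triangle (B : {set T}) z x :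
  #|B|%:R * d z x - star_weight B z <= star_weight B x.
Proof.
rewrite mulr_natl -sumr_const /star_weight -sumrB; apply: ler_sum => u _.
by have := dist_triangle z u x; rewrite (dist_sym u x); lra.
Qed.

Lemma cl_exchange_ge (A : {set T}) z x : z \in A -> x \notin A ->
  cl d A + (#|A|%:R - 1) * d z x - 2 * star_weight A z <= cl d (x |: A :\ z).
Proof.
move=> zA xNA; have xNAz : x \notin A :\ z by rewrite in_setD1 (negbTE xNA) andbF.
have card_Az : #|A|%:R = #|A :\ z|%:R + 1 :> R.
  by rewrite (cardsD1 z A) zA addnC natrD.
rewrite cl_setU1 // (cl_setD1 zA) card_Az addrK.
have := star_weight_triangle (A :\ z) z x; rewrite star_weight_setD1 //; lra.
Qed.

Lemma max_cl_dist_le (A : {set T}) z x :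
  (forall S : {set T}, #|S| = #|A| -> cl d S <= cl d A) -> z \in A -> x \notin A ->
  (#|A|%:R - 1) * d z x <= 2 * star_weight A z.
Proof.
move=> A_max zA xNA; have xNAz : x \notin A :\ z by rewrite in_setD1 (negbTE xNA) andbF.
have card_exchange : #|x |: A :\ z| = #|A| by rewrite cardsU1 xNAz (cardsD1 z A) zA.
by have := A_max _ card_exchange; have := cl_exchange_ge zA xNA; lra.
Qed.

Lemma min_star_weight_le (A : {set T}) z : (2 <= #|A|)%N ->
  (forall y, y \in A -> star_weight A z <= star_weight A y) ->
  star_weight A z <= (#|A|%:R - 1) * (cl d A / 'C(#|A|, 2)%:R).
Proof.
move=> A_ge2 z_min; have binom_gt0 : (0 : R) < 'C(#|A|, 2)%:R by rewrite ltr0n bin_gt0.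
have card_gt0 : (0 : R) < #|A|%:R by rewrite ltr0n; case: #|A| A_ge2.
have sum_star : #|A|%:R * star_weight A z <= 2 * cl d A.
  by rewrite cl_sum_star_weight mulr_natl -sumr_const; apply: ler_sum.
have cl_eq : cl d A = cl d A / 'C(#|A|, 2)%:R * 'C(#|A|, 2)%:R by rewrite divfK ?gt_eqF.
rewrite -(ler_pM2l card_gt0); apply: (le_trans sum_star).
rewrite [X in 2 * X]cl_eq mulrCA [2 * _]mulrC bin2_mul2; last by case: #|A| A_ge2.
lra.
Qed.

Lemma card_mul_lt_star_weight (A C : {set T}) z rho : C \subset A -> C != set0 ->
  (forall v, v \in C -> rho < d z v) -> #|C|%:R * rho < star_weight A z.
Proof.
move=> CA /set0Pn [c cC] C_far.
rewrite mulr_natl -sumr_const /star_weight [X in _ < X](big_setID C) /= (setIidPr CA).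
rewrite -[X in X < _]addr0 ltr_leD //; last by apply: star_weight_ge0.
by apply: ltr_sum => [|v /C_far //]; apply/hasP; exists c.
Qed.

End FiniteMetric.

Theorem lemma11 (R : realFieldType) (T : finType) (d : T -> T -> R) (k : nat)
  (OPT : {set T}) (z0 : T) :
  is_metric d ->
  (2 <= k)%N -> (k <= #|T|)%N ->
  #|OPT| = k ->
  (forall S : {set T}, #|S| = k -> cl d S <= cl d OPT) ->
  z0 \in OPT ->
  (forall z, z \in OPT -> \sum_(u in OPT) d z0 u <= \sum_(u in OPT) d z u) ->
  let Delta := cl d OPT / ('C(k, 2))%:R in
  (#|~: ball_set d z0 (2 * Delta)|%:R < k%:R / 2 :> R) /\
  (forall (u : T) (r : R), #|~: ball_set d u r|%:R < k%:R / 2 :> R ->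
     d z0 u <= 2 * Delta + r).
Proof.
move=> d_metric k_ge2 k_le_card card_OPT OPT_max z0_OPT z0_min Delta.
have k_gt1 : (1 : R) < k%:R by rewrite ltr1n.
have Delta_ge0 : 0 <= Delta by rewrite divr_ge0 ?ler0n ?cl_ge0.
have star_le : star_weight d OPT z0 <= (k%:R - 1) * Delta.
  by rewrite /Delta -card_OPT; apply: min_star_weight_le; rewrite ?card_OPT.
set C := ~: ball_set d z0 (2 * Delta).
have inC v : (v \in C) = (2 * Delta < d z0 v) by rewrite !inE ltNge.
have C_OPT : C \subset OPT.
  apply/subsetP => x; rewrite inC; apply: contraLR => xNOPT; rewrite -leNgt.
  have := max_cl_dist_le d_metric _ z0_OPT xNOPT; rewrite card_OPT => /(_ OPT_max).
  by nra.
have card_C : #|C|%:R < k%:R / 2 :> R.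
  have [-> | C_n0] := eqVneq C set0; first by rewrite cards0; lra.
  have C_far v : v \in C -> 2 * Delta < d z0 v by rewrite inC.
  have := lt_le_trans (card_mul_lt_star_weight d_metric C_OPT C_n0 C_far) star_le.
  by rewrite ltr_pdivlMr //; nra.
split=> // u r small_compl.
have /set0Pn [y] : ball_set d z0 (2 * Delta) :&: ball_set d u r != set0.
  apply: setI_neq0_card_compl; apply: leq_trans k_le_card.
  rewrite -(ltr_nat R) natrD; lra.
rewrite !inE => /andP [y_near_z0 y_near_u].
by have := dist_triangle d_metric z0 y u; rewrite (dist_sym d_metric y u); lra.
Qed.
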